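(* Assume $X$ is convex, $f$ is convex, and $X^\infty\cap\mathcal{K}(f)\neq\{0\}$. Then there exists a sequence $u_k\in\mathbb{R}^n$ with $u_k\to0$ such that $\mathrm{Sol}(u_k)=\emptyset$ for every $k\in\mathbb{N}$.
   Context: Standing assumptions: $f:\mathbb{R}^n\to\mathbb{R}\cup\{\pm\infty\}$ is proper (never $-\infty$ and finite at some point) and lower semicontinuous; $X\subset\mathbb{R}^n$ is a nonempty closed set with $\operatorname{dom}f\cap X$ unbounded. $X^\infty=\{u:\exists t_k\to+\infty,\ \exists x_k\in X,\ x_k/t_k\to u\}$; $f^\infty(d)=\inf\{\liminf_{k} f(t_kd_k)/t_k:\ t_k\to+\infty,\ d_k\to d\}$; $\mathcal{K}(f)=\{d: f^\infty(d)\le 0\}$. For $u\in\mathbb{R}^n$, $f_u(x)=f(x)-\langle u,x\rangle$ and $\mathrm{Sol}(u)=\{x\in X: f_u(x)\le f_u(y)\ \forall y\in X\}$. *)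

From HB Require Import structures.
From mathcomp Require Import all_boot all_order all_algebra.
From mathcomp Require Import all_classical all_reals all_analysis.
Set Implicit Arguments. Unset Strict Implicit. Unset Printing Implicit Defensive.
Import Order.TTheory GRing.Theory Num.Theory.
Import numFieldNormedType.Exports.
Local Open Scope classical_set_scope.
Local Open Scope ring_scope.

Section Defs.
Variables (R : realType) (n : nat).
Implicit Types (x y u d : 'rV[R]_n) (X : set 'rV[R]_n) (f : 'rV[R]_n -> \bar R).

Definition dotp (u x : 'rV[R]_n) : R := \sum_(i < n) u ord0 i * x ord0 i.

Definition proper_fun f : Prop :=
  (forall x, f x <> -oo%E) /\ (exists x, f x \is a fin_num).

Definition dom f : set 'rV[R]_n := [set x | (f x < +oo)%E].

(* f is never -oo in our use, so the right-hand side is well defined *)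
Definition convex_fun f : Prop :=
  forall x y (l : R), 0 < l < 1 ->
    (f (l *: x + (1 - l) *: y)%R <= l%:E * f x + (1 - l)%:E * f y)%E.

Definition asym_cone X : set 'rV[R]_n :=
  [set u | exists (t : nat -> R) (xs : nat -> 'rV[R]_n),
      t @ \oo --> +oo /\ (forall k, X (xs k)) /\
      (fun k => (t k)^-1 *: xs k) @ \oo --> u].

Definition asym_fun f (d : 'rV[R]_n) : \bar R :=
  ereal_inf [set v | exists (t : nat -> R) (ds : nat -> 'rV[R]_n),
      t @ \oo --> +oo /\ ds @ \oo --> d /\
      v = limn_einf (fun k => (f (t k *: ds k)%R * ((t k)^-1)%:E)%E)].

Definition Kf f : set 'rV[R]_n := [set d | (asym_fun f d <= 0)%E].

Definition tilt f (u : 'rV[R]_n) : 'rV[R]_n -> \bar R :=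
  fun x => (f x - (dotp u x)%:E)%E.

Definition Sol f X (u : 'rV[R]_n) : set 'rV[R]_n :=
  [set x | X x /\ forall y, X y -> (tilt f u x <= tilt f u y)%E].

End Defs.

From HB Require Import structures.
From mathcomp Require Import all_boot all_order all_algebra.
From mathcomp Require Import all_classical all_reals all_analysis.
From mathcomp Require Import ring lra.
Set Implicit Arguments. Unset Strict Implicit. Unset Printing Implicit Defensive.

Import Order.TTheory GRing.Theory Num.Theory.
Import numFieldNormedType.Exports.
Local Open Scope classical_set_scope.
Local Open Scope ring_scope.

(* A nonzero direction d in X^oo and K(f) is a recession direction of both X
   and f: x + s d stays in X, and f (x + s d) <= f x + s e for every e > 0.
   Tilting by u_k = d / (k+1) makes the tilted objective decrease at rate at
   least <u_k, d> / 2 > 0 along the ray x + s d, so it has no minimizer on X,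
   while u_k --> 0. *)

Lemma cvgryV0 (R : realType) (t : nat -> R) :
  t @ \oo --> +oo -> (fun k => (t k)^-1) @ \oo --> 0.
Proof. by move=> ht; apply/gtr0_cvgV0 => //; move/cvgryPgt : ht => /(_ 0). Qed.

Lemma cvgr_natS (R : realType) : (fun k : nat => (k.+1)%:R : R) @ \oo --> +oo.
Proof. by have := @cvgr_idn R; rewrite -cvg_shiftS. Qed.

Lemma limn_einf_ltP (R : realType) (u : nat -> \bar R) a N :
  (limn_einf u < a)%E -> exists2 k, (N <= k)%N & (u k < a)%E.
Proof.
move=> ua; have : (einfs u N < a)%E.
  apply: le_lt_trans ua; rewrite limn_einf_lim.
  have /cvg_lim -> := @cvg_einfs_sup R u => //.
  by apply: ereal_sup_ubound; exists N.
by move=> /ereal_inf_lt[_ [k /= Nk <-]]; exists k.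
Qed.

Lemma cvg_convex_shift (R : realType) (V : normedModType R)
    (t : nat -> R) (v : nat -> V) (x w : V) (s : R) :
  t @ \oo --> +oo -> v @ \oo --> w ->
  (fun k => (1 - s * (t k)^-1) *: x + s *: v k) @ \oo --> x + s *: w.
Proof.
move=> ht hv; apply: cvgD; last exact: cvgZ (cvg_cst s) hv.
rewrite -[X in _ --> X]scale1r; apply: cvgZr_tmp.
rewrite -[X in _ --> X]subr0; apply: cvgB; first exact: cvg_cst.
by rewrite -(mulr0 s); apply: cvgMl_tmp; apply: cvgryV0.
Qed.

Section Recession.
Variables (R : realType) (n : nat).
Implicit Types (x y u d : 'rV[R]_n) (X : set 'rV[R]_n)
  (f : 'rV[R]_n -> \bar R).

Lemma convex_set_comb X a b (l : R) :
  convex_set X -> X a -> X b -> 0 <= l <= 1 -> X ((1 - l) *: a + l *: b).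
Proof.
move=> cX Xa Xb /andP[l0 l1].
have := cX b a (Itv01 l0 l1) (mem_set Xb) (mem_set Xa).
by rewrite inE /= addrC.
Qed.

Lemma asym_cone_recession X x d (s : R) :
  convex_set X -> closed X -> X x -> asym_cone X d -> 0 <= s ->
  X (x + s *: d).
Proof.
move=> cX clX Xx [t [xs [ht [Xxs xsd]]]] s0.
pose z k := (1 - s * (t k)^-1) *: x + s *: ((t k)^-1 *: xs k).
apply: (@closed_cvg nat _ \oo _ z X clX); last exact: cvg_convex_shift.
move/cvgryPgt: ht => /(_ s) hts; near=> k.
have st : s < t k by near: k.
have t0 : 0 < t k by apply: le_lt_trans st.
rewrite /z scalerA; apply: convex_set_comb => //.
by rewrite mulr_ge0 ?invr_ge0 ?(ltW t0) //= ler_pdivrMr // mul1r ltW.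
Unshelve. all: by end_near.
Qed.

(* Pick (t k, d k) realizing f^oo(d) < e / 2, take the convex combination of x
   and t k d k that is close to x + s d, and bound it by convexity; lower
   semicontinuity at x + s d rules out f (x + s d) > r + s e. *)
Lemma Kf_recession f x d (r s e : R) :
  convex_fun f -> lower_semicontinuous f -> (forall y, f y <> -oo%E) ->
  Kf f d -> f x = r%:E -> 0 < s -> 0 < e ->
  (f (x + s *: d)%R <= (r + s * e)%:E)%E.
Proof.
move=> cf lsc fNy Kd fx s0 e0.
rewrite leNgt; apply/negP => /lsc[V Vnbhs fV].
have e20 : 0 < e / 2 by rewrite divr_gt0.
have : (asym_fun f d < (e / 2)%:E)%E by apply: le_lt_trans Kd _; rewrite lte_fin.
move=> /ereal_inf_lt[_ [t [ds [ht [dsd ->]]]]] einf_lt.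
pose z k := (1 - s * (t k)^-1) *: x + s *: ds k.
have near_k : \forall k \near \oo, V (z k) /\ s < t k /\ `|r * (t k)^-1| < e / 2.
  have rt0 : (fun k => r * (t k)^-1) @ \oo --> 0.
    by rewrite -(mulr0 r); apply: cvgMl_tmp; apply: cvgryV0.
  have zV := cvg_convex_shift (x := x) (s := s) ht dsd Vnbhs.
  move/cvgryPgt: ht => /(_ s) st.
  have := cvgr0_norm_lt _ rt0 _ e20 => rt.
  near=> k; split; [|split]; near: k; [exact: zV | exact: st | exact: rt].
have [N _ HN] := near_k.
have [k Nk fk] := limn_einf_ltP N einf_lt.
have [Vz [st rt]] := HN k Nk.
have t0 : 0 < t k by apply: lt_trans s0 st.
have zE : z k = (1 - s / t k) *: x + (1 - (1 - s / t k)) *: (t k *: ds k).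
  by rewrite subKr /z scalerA divfK ?gt_eqF.
have l01 : 0 < 1 - s / t k < 1.
  by rewrite subr_gt0 ltr_pdivrMr // mul1r st ltrBlDr ltrDl divr_gt0.
have := cf x (t k *: ds k) _ l01; rewrite -zE => /(lt_le_trans (fV _ Vz)).
move: fk; rewrite fx; case: (f (t k *: ds k)) (fNy (t k *: ds k)) => [w| |] //= _.
- rewrite !lte_fin => wt.
  move: rt; rewrite ltr_norml => /andP[rt1 rt2].
  have a0 : 0 < (t k)^-1 by rewrite invr_gt0.
  set a := (t k)^-1 in wt rt1 rt2 a0 *.
  have sw_lt : s * (w * a) < s * (e / 2) by rewrite ltr_pM2l.
  have sr_lt : s * (- (r * a)) < s * (e / 2) by rewrite ltr_pM2l // ltrNl.
  move=> lt; clear -lt sw_lt sr_lt s0 e0; nra.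
- by rewrite gt0_mulye ?lte_fin ?invr_gt0 // ltNge leey.
Unshelve. all: by end_near.
Qed.

Lemma asym_cone_Kf0 f X :
  X !=set0 -> proper_fun f -> (asym_cone X `&` Kf f) 0.
Proof.
move=> [x Xx] [_ [x1 fx1]].
have invS_cvg0 := cvgryV0 (@cvgr_natS R).
split.
  exists (fun k => (k.+1)%:R), (fun=> x); split; first exact: cvgr_natS.
  by split=> //; rewrite -(scale0r x); apply: cvgZr_tmp.
have [c fc] : exists c, f x1 = c%:E by case: (f x1) fx1 => // c; exists c.
apply: ereal_inf_lbound.
exists (fun k => (k.+1)%:R), (fun k => ((k.+1)%:R)^-1 *: x1).
split; first exact: cvgr_natS.
split; first by rewrite -(scale0r x1); apply: cvgZr_tmp.
have : (fun k : nat => (c * ((k.+1)%:R)^-1)%:E) @ \oo --> 0%E.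
  by apply: cvg_EFin; [near=> k | rewrite -(mulr0 c); apply: cvgMl_tmp].
move=> /cvg_limn_einf_sup [<- _]; congr limn_einf; apply: funext => k.
by rewrite scalerA divff // scale1r fc.
Unshelve. all: by end_near.
Qed.

Lemma dotpD u x y : dotp u (x + y) = dotp u x + dotp u y.
Proof. by rewrite /dotp -big_split; apply: eq_bigr => i _; rewrite mxE mulrDr. Qed.

Lemma dotpZ u x (a : R) : dotp u (a *: x) = a * dotp u x.
Proof. by rewrite /dotp mulr_sumr; apply: eq_bigr => i _; rewrite mxE mulrCA. Qed.

Lemma dotpZl u x (a : R) : dotp (a *: u) x = a * dotp u x.
Proof. by rewrite /dotp mulr_sumr; apply: eq_bigr => i _; rewrite mxE mulrA. Qed.

Lemma dotp_gt0 d : d != 0 -> 0 < dotp d d.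
Proof.
move=> d0; have sq (i : 'I_n) : true -> 0 <= d ord0 i * d ord0 i.
  by rewrite -expr2 sqr_ge0.
rewrite /dotp lt_def sumr_ge0 ?andbT //.
apply: contra d0 => /eqP /(psumr_eq0P sq) d2; apply/eqP/rowP => i.
by rewrite !mxE; apply/eqP; rewrite -[_ == 0]orbb -mulf_eq0 d2.
Qed.

Lemma tilt_recession_le f x d u (r s : R) :
  convex_fun f -> lower_semicontinuous f -> (forall y, f y <> -oo%E) ->
  Kf f d -> 0 < dotp u d -> f x = r%:E -> 0 < s ->
  (tilt f u (x + s *: d) <= (r - dotp u x - s * (dotp u d / 2))%:E)%E.
Proof.
move=> cf lsc fNy Kd ud fx s0.
have := Kf_recession cf lsc fNy Kd fx s0 (divr_gt0 ud (ltr0Sn _ 1)).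
rewrite /tilt dotpD dotpZ.
case: (f (x + s *: d)) (fNy (x + s *: d)) => [w| |] //= _.
by rewrite !lee_fin; lra.
Qed.

Lemma Sol_recession_eq0 f X d u :
  convex_fun f -> lower_semicontinuous f -> (forall y, f y <> -oo%E) ->
  convex_set X -> closed X -> (dom f `&` X) !=set0 ->
  asym_cone X d -> Kf f d -> 0 < dotp u d -> Sol f X u = set0.
Proof.
move=> cf lsc fNy cX clX [x [domx Xx]] Xd Kd ud.
have [r fx] : exists r, f x = r%:E.
  by move: domx (fNy x); rewrite /dom /=; case: (f x) => // r; exists r.
apply/seteqP; split => // y [Xy ymin].
have tilt_le s : 0 < s ->
    (tilt f u y <= (r - dotp u x - s * (dotp u d / 2))%:E)%E.
  move=> s0; apply: le_trans (ymin _ (asym_cone_recession cX clX Xx Xd (ltW s0))) _.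
  exact: tilt_recession_le.
move: (tilt_le 1 ltr01); rewrite /tilt.
case fy: (f y) (fNy y) => [q| |] //= _ _.
set C := r - dotp u x; set rho := q - dotp u y.
pose s := (`|C - rho| + 1) * 2 / dotp u d.
have s0 : 0 < s by rewrite !mulr_gt0 ?invr_gt0 // ltr_pwDr.
have := tilt_le s s0; rewrite /tilt fy lee_fin.
have -> : s * (dotp u d / 2) = `|C - rho| + 1 by rewrite /s; field; rewrite gt_eqF.
by rewrite -/C -/rho; have := ler_norm (C - rho); lra.
Qed.

End Recession.

Theorem mainTheorem6 (R : realType) (n : nat)
    (f : 'rV[R]_n -> \bar R) (X : set 'rV[R]_n) :
  proper_fun f ->
  lower_semicontinuous f ->
  X !=set0 ->
  closed X ->
  ~ bounded_set (dom f `&` X) ->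
  convex_set X ->
  convex_fun f ->
  asym_cone X `&` Kf f <> [set (0 : 'rV[R]_n)] ->
  exists u : nat -> 'rV[R]_n,
    u @ \oo --> (0 : 'rV[R]_n) /\ forall k : nat, Sol f X (u k) = set0.
Proof.
move=> pf lsc Xne clX unbounded cX cf XK_ne0.
have [fNy _] := pf.
have [d [[Xd Kd] d0]] : exists d, (asym_cone X `&` Kf f) d /\ d != 0.
  apply: contra_notP XK_ne0 => no_d; apply/seteqP; split => [y XKy|_ ->].
    by apply/eqP; apply: contra_notT no_d => y0; exists y.
  exact: asym_cone_Kf0.
have domX_ne0 : (dom f `&` X) !=set0.
  apply: contra_notP unbounded => /set0P/negP/negbNE/eqP ->.
  by exists 0; split => // M _ y.
exists (fun k => ((k.+1)%:R)^-1 *: d); split.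
  by rewrite -(scale0r d); apply: cvgZr_tmp; apply: cvgryV0; apply: cvgr_natS.
move=> k; apply: Sol_recession_eq0 Xd Kd _ => //.
by rewrite dotpZl mulr_gt0 ?invr_gt0 ?ltr0Sn ?dotp_gt0.
Qed.
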